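(* Let $P\in\mathbb{R}[X,Y]$ satisfy: (i) $P(-X,-Y)=P(X,Y)$; (ii) $P(X,Y)=-P(Y,X)$; (iii) $2P(X,Y)=P(Y,-X-Y)-P(X,-X-Y)$; (iv) $\frac{1}{X}P(Y,X-Y)+\frac{1}{Y}P(X,Y-X)=0$ as an identity of rational functions. Then $P=0$. *)

From HB Require Import structures.
From mathcomp Require Import all_boot all_order all_algebra.
From mathcomp Require Import fraction.
From mathcomp Require Import mpoly.
From mathcomp Require Import reals.
Set Implicit Arguments. Unset Strict Implicit. Unset Printing Implicit Defensive.
Import Order.TTheory GRing.Theory Num.Theory.
Local Open Scope ring_scope.

Definition pX {R : realType} : {mpoly R[2]} := 'X_(0 : 'I_2).
Definition pY {R : realType} : {mpoly R[2]} := 'X_(1 : 'I_2).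

Definition ev2 {R : realType} (P a b : {mpoly R[2]}) : {mpoly R[2]} :=
  P \mPo [tuple a; b].

Definition toRat {R : realType} (p : {mpoly R[2]}) : {fraction {mpoly R[2]}} :=
  tofrac p.

From HB Require Import structures.
From mathcomp Require Import all_boot all_order all_algebra.
From mathcomp Require Import fraction mpoly reals.
From mathcomp Require Import ring.
Set Implicit Arguments. Unset Strict Implicit. Unset Printing Implicit Defensive.
Import GRing.Theory Num.Theory.
Local Open Scope ring_scope.

(* Conditions (ii) and (iii) force the cyclic invariance P(Y, -X-Y) = P(X, Y)
   (the two relations combine into 3 (P - P(Y, -X-Y)) = 0).  Clearing
   denominators in (iv) and substituting Y := X + Y then gives
   (X + Y) P(X + Y, -Y) + X P(X, Y) = 0, and by (i), (ii) and the cyclic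
   invariance P(X + Y, -Y) = -P, so Y P = 0 and hence P = 0. *)

Lemma mpolyX_neq0 (n : nat) (R : nzRingType) (i : 'I_n) :
  'X_i != 0 :> {mpoly R[n]}.
Proof.
apply/eqP => /(congr1 (mcoeff U_(i))).
by rewrite mcoeffXU eqxx mcoeff0 => /eqP; rewrite oner_eq0.
Qed.

Lemma tofrac_add_divr_eq0 (R : idomainType) (a b c d : R) :
  c != 0 -> d != 0 ->
  (tofrac c)^-1 * tofrac a + (tofrac d)^-1 * tofrac b = 0 -> d * a + c * b = 0.
Proof.
move=> c_neq0 d_neq0 h; apply/eqP; rewrite -tofrac_eq0 tofracD !tofracM.
have cF_neq0 : tofrac c != 0 by rewrite tofrac_eq0.
have dF_neq0 : tofrac d != 0 by rewrite tofrac_eq0.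
have := congr1 (fun f => tofrac c * tofrac d * f) h.
rewrite mulr0 mulrDr => <-.
by rewrite mulrAC mulVKf // -mulrA mulVKf // mulrC.
Qed.

Section Substitution.
Variable R : realType.
Implicit Types P Q a b c d : {mpoly R[2]}.

Lemma ev2_comp P a b c d :
  ev2 (ev2 P a b) c d = ev2 P (ev2 a c d) (ev2 b c d).
Proof.
rewrite /ev2 (comp_mpolyEX P) (comp_mpolyEX P [tuple _; _]) raddf_sum /=.
apply: eq_bigr => m _; rewrite linearZ /= !comp_mpolyX rmorph_prod.
congr (_ *: _); apply: eq_bigr => i _; rewrite rmorphXn; congr (_ ^+ _).
by case: i => [[|[|//]]] ?; rewrite !(tnth_nth 0).
Qed.

Lemma ev2X a b : ev2 pX a b = a.
Proof. by rewrite /ev2 /pX comp_mpolyXU. Qed.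

Lemma ev2Y a b : ev2 pY a b = b.
Proof. by rewrite /ev2 /pY comp_mpolyXU. Qed.

Lemma ev2_id P : ev2 P pX pY = P.
Proof.
rewrite -[RHS](comp_mpoly_id P) /ev2; congr comp_mpoly.
apply: eq_from_tnth => i; rewrite tnth_map tnth_ord_tuple.
by case: i => [[|[|//]]] ?; rewrite !(tnth_nth 0).
Qed.

Lemma ev2_0 a b : ev2 0 a b = 0.
Proof. exact: comp_mpoly0. Qed.

Lemma ev2D P Q a b : ev2 (P + Q) a b = ev2 P a b + ev2 Q a b.
Proof. exact: comp_mpolyD. Qed.

Lemma ev2N P a b : ev2 (- P) a b = - ev2 P a b.
Proof. exact: comp_mpolyN. Qed.

Lemma ev2B P Q a b : ev2 (P - Q) a b = ev2 P a b - ev2 Q a b.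
Proof. exact: comp_mpolyB. Qed.

Lemma ev2M P Q a b : ev2 (P * Q) a b = ev2 P a b * ev2 Q a b.
Proof. exact: rmorphM. Qed.

Lemma ev2_natmul P a b (k : nat) : ev2 (k%:R * P) a b = k%:R * ev2 P a b.
Proof. by rewrite ev2M /ev2 rmorph_nat. Qed.

Lemma pX_neq0 : pX != 0 :> {mpoly R[2]}.
Proof. exact: mpolyX_neq0. Qed.

Lemma pY_neq0 : pY != 0 :> {mpoly R[2]}.
Proof. exact: mpolyX_neq0. Qed.

End Substitution.

Section CyclicInvariance.
Variables (R : realType) (P : {mpoly R[2]}).
Implicit Types a b : {mpoly R[2]}.

Hypothesis P_antisym : P = - ev2 P pY pX.
Hypothesis P_three_term :
  2%:R * P = ev2 P pY (- pX - pY) - ev2 P pX (- pX - pY).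

Lemma ev2_antisym a b : ev2 P a b = - ev2 P b a.
Proof.
by have := congr1 (fun Q => ev2 Q a b) P_antisym; rewrite /= ev2N ev2_comp ev2X ev2Y.
Qed.

Lemma ev2_three_term a b :
  2%:R * ev2 P a b = ev2 P b (- a - b) - ev2 P a (- a - b).
Proof.
have := congr1 (fun Q => ev2 Q a b) P_three_term.
by rewrite /= ev2_natmul ev2B !ev2_comp !ev2B !ev2N !ev2X !ev2Y.
Qed.

Lemma ev2_cyclic : ev2 P pY (- pX - pY) = P.
Proof.
set Z := - pX - pY.
have P2 : 2%:R * P = ev2 P pY Z + ev2 P Z pX.
  by rewrite P_three_term (ev2_antisym pX Z) opprK.
have PYZ2 : 2%:R * ev2 P pY Z = ev2 P Z pX + P.
  rewrite ev2_three_term (_ : - pY - Z = pX); last by rewrite /Z; ring.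
  by rewrite (ev2_antisym pY pX) opprK ev2_id.
have : (3%:R : R) *: (P - ev2 P pY Z) = 0.
  rewrite -mul_mpolyC rmorph_nat.
  have -> : 3%:R * (P - ev2 P pY Z)
           = (2%:R * P - 2%:R * ev2 P pY Z) - (ev2 P pY Z - P) by ring.
  by rewrite P2 PYZ2; ring.
by move/eqP; rewrite scaler_eq0 pnatr_eq0 /= subr_eq0 => /eqP <-.
Qed.

Hypothesis P_even : ev2 P (- pX) (- pY) = P.

Lemma ev2_even a b : ev2 P (- a) (- b) = ev2 P a b.
Proof.
by have := congr1 (fun Q => ev2 Q a b) P_even; rewrite /= ev2_comp !ev2N ev2X ev2Y.
Qed.

Lemma ev2_shear : ev2 P (pX + pY) (- pY) = - P.
Proof.
rewrite (_ : pX + pY = - (- pX - pY)); last by ring.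
by rewrite ev2_even ev2_antisym ev2_cyclic.
Qed.

End CyclicInvariance.

Theorem mainTheorem9 (R : realType) (P : {mpoly R[2]}) :
  ev2 P (- pX) (- pY) = P ->
  P = - ev2 P pY pX ->
  2%:R * P = ev2 P pY (- pX - pY) - ev2 P pX (- pX - pY) ->
  (toRat pX)^-1 * toRat (ev2 P pY (pX - pY))
    + (toRat pY)^-1 * toRat (ev2 P pX (pY - pX)) = 0 ->
  P = 0.
Proof.
move=> P_even P_antisym P_three_term P_iv.
have cleared : pY * ev2 P pY (pX - pY) + pX * ev2 P pX (pY - pX) = 0.
  exact: tofrac_add_divr_eq0 (pX_neq0 R) (pY_neq0 R) P_iv.
have := congr1 (fun Q => ev2 Q pX (pX + pY)) cleared.
rewrite /= ev2D !ev2M !ev2_comp !ev2B !ev2X !ev2Y ev2_0.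
rewrite (_ : pX - (pX + pY) = - pY); last by ring.
rewrite (_ : pX + pY - pX = pY); last by ring.
rewrite ev2_id (ev2_shear P_antisym P_three_term P_even) => sheared.
have : pY * P = 0 by rewrite -oppr0 -sheared; ring.
by move/eqP; rewrite mulf_eq0 (negbTE (pY_neq0 R)) => /eqP.
Qed.
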